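(* Let $\mathbb F$ be a field and $f(x)$ a nonzero polynomial in $\mathbb F[x]$. Then $d(f(x))=|(\mathbb F[x])'/P_{J([f(x)]_\sim)}|$, where $(\mathbb F[x])'=\mathbb F[x]_{mult}/\sim$.
   Context: $\mathbb F[x]_{mult}$ is the multiplicative semigroup of $\mathbb F[x]$; $\sim$ is the associate relation, a congruence on it; $[g]_\sim$ is the $\sim$-class of $g$. $J([f(x)]_\sim)$ is the ideal of the semigroup $(\mathbb F[x])'$ generated by $[f(x)]_\sim$. For a semigroup $S$, $H\subseteq S$, $a\in S$: $H\dots a=\{(u,v)\in S\times S: uav\in H\}$ and $P_H=\{(a,b)\in S\times S: H\dots a=H\dots b\}$. $d(f(x))$ is the number of pairwise non-associated divisors of $f(x)$ in $\mathbb F[x]$. *)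

From HB Require Import structures.
From mathcomp Require Import all_boot all_algebra generic_quotient.
Set Implicit Arguments. Unset Strict Implicit. Unset Printing Implicit Defensive.
Import GRing.Theory.
Local Open Scope ring_scope.

Section Semigroup.
Variables (T : Type) (mul : T -> T -> T).

(* J(a): the (two-sided) ideal of the semigroup generated by a, i.e. S^1 a S^1 *)
Definition sg_ideal_gen (a : T) : T -> Prop :=
  fun x => x = a \/ (exists u, x = mul u a) \/ (exists v, x = mul a v)
           \/ (exists u v, x = mul (mul u a) v).

Definition sg_dots (H : T -> Prop) (a : T) : T * T -> Prop :=
  fun uv => H (mul (mul uv.1 a) uv.2).

Definition sg_P (H : T -> Prop) (a b : T) : Prop := sg_dots H a = sg_dots H b.
End Semigroup.

Definition quot_card (T : Type) (R : T -> T -> Prop) (n : nat) : Prop :=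
  exists g : 'I_n -> T,
    (forall i j, R (g i) (g j) -> i = j) /\ (forall x, exists i, R x (g i)).

Section PolyAssoc.
Variable F : fieldType.

Definition assoc_rel : equiv_rel {poly F} :=
  EquivRel (@eqp F) (@eqpxx F) (@eqp_sym F) (@eqp_trans F).

Definition polyS := {eq_quot assoc_rel}%qT.

(* multiplication induced on classes (~ is a congruence) *)
Definition polyS_mul (x y : polyS) : polyS :=
  \pi_(polyS)%qT (repr x * repr y).

Definition cls (g : {poly F}) : polyS := \pi_(polyS)%qT g.

Definition num_nonassoc_divisors (f : {poly F}) (n : nat) : Prop :=
  exists g : 'I_n -> {poly F},
    (forall i, g i %| f) /\ (forall i j, g i %= g j -> i = j) /\
    (forall p, p %| f -> exists i, p %= g i).
End PolyAssoc.

From HB Require Import structures.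
From mathcomp Require Import all_boot all_algebra generic_quotient.
From Stdlib Require Import Classical FunctionalExtensionality PropExtensionality.
Set Implicit Arguments. Unset Strict Implicit. Unset Printing Implicit Defensive.
Import GRing.Theory.
Local Open Scope ring_scope.

(* Let H = J([f]).  Since [u][a][v] lies in H iff f divides u a v, the classes
   [a] and [b] are P_H-related iff f | w a <-> f | w b for every w, that is,
   iff gcd(f, a) and gcd(f, b) are associate.  So every P_H-class contains
   exactly one class [d] of a divisor d of f, and there are finitely many
   such [d] because every divisor of f = g p, p irreducible, is associate to
   a divisor of g or to p times one. *)

Lemma quot_card_uniq (T : eqType) (R : T -> T -> Prop) (t : seq T) :
  uniq t -> {in t &, forall x y, R x y -> x = y} ->
  (forall x, exists2 y, y \in t & R x y) -> quot_card R (size t).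
Proof.
move=> t_uniq R_inj R_cover.
have /tuple_uniqP tnth_inj : uniq (in_tuple t) := t_uniq.
exists (tnth (in_tuple t)); split => [i j Rij|x].
  by apply: tnth_inj; apply: R_inj; rewrite ?mem_tnth.
by have [y /seq_tnthP[i ->] Rxy] := R_cover x; exists i.
Qed.

Section PolyDivisors.
Variable F : fieldType.
Implicit Types d e f p q w : {poly F}.

Lemma eqp_gcdp_dvd d f : d %| f -> gcdp f d %= d.
Proof. by move=> df; rewrite /eqp dvdp_gcdr dvdp_gcd dvdpp df. Qed.

Lemma dvdp_mul_gcdpr f w p : (f %| w * gcdp f p) = (f %| w * p).
Proof.
apply/idP/idP => [fwg|fwp].
  exact: dvdp_trans fwg (dvdp_mul (dvdpp w) (dvdp_gcdr f p)).
by rewrite (eqp_dvdr _ (mulp_gcdr _ _ _)) dvdp_gcd fwp dvdp_mull.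
Qed.

Lemma dvdp_mul_cofactor f d e : f != 0 -> d %| f -> (f %| f %/ d * e) = (d %| e).
Proof.
move=> f0 df; have q0 : f %/ d != 0.
  by apply: contraNneq f0 => q0; rewrite -(divpK df) q0 mul0r.
by rewrite -{1}(divpK df) dvdp_mul2l.
Qed.

Lemma eq_dvdp_mulE f p q : f != 0 ->
  (forall w, (f %| w * p) = (f %| w * q)) <-> gcdp f p %= gcdp f q.
Proof.
move=> f0; split => [ann_pq|gpq w]; last first.
  rewrite -(dvdp_mul_gcdpr f w p) -(dvdp_mul_gcdpr f w q).
  exact: eqp_dvdr (eqp_mull _ gpq).
have gcd_dvd r s : (forall w, (f %| w * r) = (f %| w * s)) -> gcdp f r %| gcdp f s.
  move=> ann_rs; rewrite -(dvdp_mul_cofactor (gcdp f s) f0 (dvdp_gcdl f r)).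
  by rewrite dvdp_mul_gcdpr -ann_rs -dvdp_mul_gcdpr divpK ?dvdp_gcdl.
by apply/andP; split; apply: gcd_dvd => w; rewrite ann_pq.
Qed.

Lemma irredp_dvdp_exists p :
  (1 < size p)%N -> exists2 q, irreducible_poly q & q %| p.
Proof.
have [n] := ubnP (size p); elim: n p => // n IHn p /[!ltnS] sp_n sp_gt1.
have [irr_p|red_p] := classic (irreducible_poly p); first by exists p.
have [q [sq1 qp nqp]] : exists q, [/\ size q != 1%N, q %| p & ~~ (q %= p)].
  apply: NNPP => no_q; apply: red_p; split => // q sq1 qp.
  by have [//|nqp] := boolP (q %= p); case: no_q; exists q.
have p0 : p != 0 by rewrite -size_poly_gt0 ltnW.
have sq_lt : (size q < size p)%N.
  by rewrite ltn_neqAle dvdp_size_eqp // nqp dvdp_leq.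
have q0 : q != 0 by apply: contraNneq p0 => q0; move: qp; rewrite q0 dvd0p.
have sq_gt1 : (1 < size q)%N by rewrite ltn_neqAle eq_sym sq1 size_poly_gt0.
have [r irr_r rq] := IHn q (leq_trans sq_lt sp_n) sq_gt1.
by exists r; last exact: dvdp_trans qp.
Qed.

Lemma divisors_eqp_finite f : f != 0 ->
  exists s : seq {poly F}, (forall d, d \in s -> d %| f) /\
    (forall e, e %| f -> exists2 d, d \in s & e %= d).
Proof.
have [n] := ubnP (size f); elim: n f => // n IHn f /[!ltnS] sf_n f0.
have [sf_le1|sf_gt1] := leqP (size f) 1.
  have f1 : f %= 1.
    by rewrite -size_poly_eq1 eqn_leq sf_le1 size_poly_gt0.
  exists [:: 1]; split => [d|e ef]; first by rewrite inE => /eqP ->; apply: dvd1p.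
  by exists 1; rewrite ?inE ?(dvdp_eqp1 ef f1).
have [p irr_p pf] := irredp_dvdp_exists sf_gt1.
have p0 := irredp_neq0 irr_p.
have fE : f = f %/ p * p by rewrite divpK.
have g0 : f %/ p != 0 by apply: contraNneq f0 => g0; rewrite fE g0 mul0r.
have sg_lt : (size (f %/ p)%R < size f)%N.
  by rewrite size_divp // ltn_subrL -subn1 subn_gt0 irr_p.1 (ltn_trans _ sf_gt1).
have [s [s_dvd s_cover]] := IHn _ (leq_trans sg_lt sf_n) g0.
exists (s ++ map ( *%R^~ p) s); split => [d|e ef].
  rewrite mem_cat => /orP[/s_dvd dg|/mapP[d' /s_dvd dg ->]].
    by rewrite fE dvdp_mulr.
  by rewrite fE dvdp_mul2r.
have [gcd1|gcdp_p] := irredp_XsubCP irr_p (dvdp_gcdl p e).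
  have : e %| f %/ p.
    by rewrite -(Gauss_dvdpl _ (_ : coprimep e p)) -?fE // coprimep_sym -gcdp_eqp1.
  by move=> /s_cover[d ds ed]; exists d; rewrite ?mem_cat ?ds.
have pe : p %| e by rewrite -(eqp_dvdl _ gcdp_p) dvdp_gcdr.
have : e %/ p %| f %/ p by rewrite -(dvdp_mul2r _ _ p0) !divpK.
move=> /s_cover[d ds ed]; exists (d * p).
  by rewrite mem_cat; apply/orP; right; apply/mapP; exists d.
by rewrite -(divpK pe) eqp_mulr.
Qed.

End PolyDivisors.

Section AssociateClasses.
Variable F : fieldType.
Implicit Types a b f p q u v : {poly F}.

Lemma eqp_clsP p q : reflect (cls p = cls q) (p %= q).
Proof. exact: eqquotP. Qed.

Lemma cls_repr (x : polyS F) : cls (repr x) = x.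
Proof. exact: reprK. Qed.

Lemma repr_cls p : repr (cls p) %= p.
Proof. by apply/eqp_clsP; rewrite cls_repr. Qed.

Lemma cls_mul p q : polyS_mul (cls p) (cls q) = cls (p * q).
Proof.
apply/eqp_clsP.
exact: eqp_trans (eqp_mulr _ (repr_cls p)) (eqp_mull _ (repr_cls q)).
Qed.

Lemma ideal_gen_cls f p : sg_ideal_gen (@polyS_mul F) (cls f) (cls p) <-> f %| p.
Proof.
split=> [|fp]; last by right; left; exists (cls (p %/ f)); rewrite cls_mul divpK.
case=> [|[[u]|[[v]|[u [v]]]]].
- by move=> /eqp_clsP/eqp_dvdr->.
- by rewrite -[u]cls_repr cls_mul => /eqp_clsP/eqp_dvdr->; rewrite dvdp_mull.
- by rewrite -[v]cls_repr cls_mul => /eqp_clsP/eqp_dvdr->; rewrite dvdp_mulr.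
- rewrite -[u]cls_repr -[v]cls_repr !cls_mul => /eqp_clsP/eqp_dvdr->.
  by rewrite dvdp_mulr ?dvdp_mull.
Qed.

Lemma sg_dots_ideal_cls f a u v :
  sg_dots (@polyS_mul F) (sg_ideal_gen (@polyS_mul F) (cls f)) (cls a) (cls u, cls v)
  <-> f %| u * v * a.
Proof. by rewrite /sg_dots /= !cls_mul mulrAC; apply: ideal_gen_cls. Qed.

Lemma sg_P_ideal_cls f a b : f != 0 ->
  sg_P (@polyS_mul F) (sg_ideal_gen (@polyS_mul F) (cls f)) (cls a) (cls b)
  <-> gcdp f a %= gcdp f b.
Proof.
move=> f0; rewrite -eq_dvdp_mulE //; split=> [Pab w|ann_ab].
  have := sg_dots_ideal_cls f a w 1; have := sg_dots_ideal_cls f b w 1.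
  by rewrite Pab !mulr1 => eb ea; apply/idP/idP => [/ea/eb|/eb/ea].
apply: functional_extensionality => -[u v]; apply: propositional_extensionality.
rewrite -[u]cls_repr -[v]cls_repr.
by split=> /sg_dots_ideal_cls fd; apply/sg_dots_ideal_cls;
  [rewrite -ann_ab|rewrite ann_ab].
Qed.

Lemma divisor_classes f : f != 0 ->
  exists2 t : seq (polyS F), uniq t & forall p, (cls p \in t) = (p %| f).
Proof.
move=> /divisors_eqp_finite[s [s_dvd s_cover]].
exists (undup (map (@cls F) s)) => [|p]; first exact: undup_uniq.
rewrite mem_undup; apply/mapP/idP => [[d ds /eqp_clsP pd]|/s_cover[d ds pd]].
  by rewrite (eqp_dvdl _ pd) s_dvd.
by exists d => //; apply/eqp_clsP.
Qed.

Lemma num_nonassoc_divisors_cls f (t : seq (polyS F)) :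
  uniq t -> (forall p, (cls p \in t) = (p %| f)) -> num_nonassoc_divisors f (size t).
Proof.
move=> t_uniq tE; have /tuple_uniqP tnth_inj : uniq (in_tuple t) := t_uniq.
exists (fun i => repr (tnth (in_tuple t) i)); split; [|split].
- by move=> i; rewrite -tE cls_repr mem_tnth.
- by move=> i j /eqp_clsP; rewrite !cls_repr; apply: tnth_inj.
- by move=> p; rewrite -tE => /seq_tnthP[i ei]; exists i; rewrite -ei eqp_sym repr_cls.
Qed.
End AssociateClasses.

Theorem theorem5 (F : fieldType) (f : {poly F}) (hf : f != 0) :
  exists n : nat,
    num_nonassoc_divisors f n /\
    quot_card (sg_P (@polyS_mul F) (sg_ideal_gen (@polyS_mul F) (cls f))) n.
Proof.
have [t t_uniq tE] := divisor_classes hf.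
exists (size t); split; first exact: num_nonassoc_divisors_cls.
apply: quot_card_uniq => // [x y|x].
  rewrite -[x]cls_repr -[y]cls_repr !tE => xf yf /(sg_P_ideal_cls _ _ hf) gxy.
  apply/eqp_clsP.
  by rewrite -(eqp_ltrans (eqp_gcdp_dvd xf)) -(eqp_rtrans (eqp_gcdp_dvd yf)).
exists (cls (gcdp f (repr x))); first by rewrite tE dvdp_gcdl.
rewrite -{1}[x]cls_repr; apply/sg_P_ideal_cls => //.
by rewrite eqp_sym eqp_gcdp_dvd ?dvdp_gcdl.
Qed.
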